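(* Let $0<\alpha\le 1$. There exists $n_0(\alpha)$ such that the following holds for all integers $n\ge n_0(\alpha)$ and $m\in\mathbb{N}$ with $\alpha n\le m\le n/2$. Let $G$ be a digraph on $n$ vertices with $\delta^0(G)\ge \delta n$, where $0<\delta<1$. Then there exists a vertex subset $W\subseteq V(G)$ with $|W|=m$ such that \[ \frac{\delta^0(G[W])}{m}\ \ge\ \delta-2n^{-1/3}\quad\text{and}\quad \frac{\delta^0(G\setminus W)}{n-m}\ \ge\ \delta-2n^{-1/3}. \]
   Context: For a digraph $G$, $d^+(v)$ and $d^-(v)$ denote the out-degree and in-degree of a vertex $v$, and $\delta^0(G)=\min\{d^+(v),d^-(v):v\in V(G)\}$ is the minimum semi-degree. For $W\subseteq V(G)$, $G[W]$ is the subdigraph induced on $W$, and $G\setminus W$ denotes $G[V(G)\setminus W]$. *)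

From mathcomp Require Import all_boot.
From Stdlib Require Import Reals.
Set Implicit Arguments. Unset Strict Implicit. Unset Printing Implicit Defensive.

(* A digraph on n vertices: vertex set 'I_n, arc relation E (E u v = arc u->v),
   loopless (irreflexive); antiparallel arcs allowed, no multi-arcs. *)
Definition loopless (n : nat) (E : rel 'I_n) : Prop := forall v, ~~ E v v.

Definition outdeg_in (n : nat) (E : rel 'I_n) (W : {set 'I_n}) (v : 'I_n) : nat :=
  #|[set u in W | E v u]|.
Definition indeg_in (n : nat) (E : rel 'I_n) (W : {set 'I_n}) (v : 'I_n) : nat :=
  #|[set u in W | E u v]|.

(* minimum semi-degree delta^0(G[W]) (conventionally 0 if W is empty;
   #|W| is an upper bound for all degrees so it serves as the neutral value) *)
Definition semideg (n : nat) (E : rel 'I_n) (W : {set 'I_n}) : nat :=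
  \big[minn/#|W|]_(v in W) minn (outdeg_in E W v) (indeg_in E W v).

From Stdlib Require Import Reals Lra Lia ZArith.
From mathcomp Require Import all_boot order zify.
Set Implicit Arguments. Unset Strict Implicit. Unset Printing Implicit Defensive.

(* For a fixed set A, the number of
   W with |W :&: A| = k is 'C(|A|, k) * 'C(n - |A|, m - k); once k exceeds the
   mean m|A|/n by J, consecutive terms shrink by a factor 1 - J/(2n), so at
   most a fraction (m + 1)(1 - J/(2n))^J of all W exceed the mean by 2J.  With
   J ~ alpha n^(2/3) / 2 this fraction is below 1/(4n) for large n, and a union
   bound over the 4n sets A given by the in- and out-neighbourhoods and their
   complements yields a W meeting every neighbourhood in m|A|/n +- 2J vertices.
   Since 2J <= 2 m n^(-1/3), both G[W] and G \ W then keep the minimum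
   semi-degree ratio up to 2 n^(-1/3). *)

Lemma card_bigcup_le (I T : finType) (P : pred I) (F : I -> {set T}) :
  #|\bigcup_(i | P i) F i| <= \sum_(i | P i) #|F i|.
Proof.
elim/big_rec2: _ => [|i s U _ leUs]; first by rewrite cards0.
by rewrite (leq_trans (leq_card_setU _ _).1) ?leq_add2l.
Qed.

Definition hgeom (a b m k : nat) : nat := 'C(a, k) * 'C(b, m - k).

Lemma card_draws_meet_le (T : finType) (A : {set T}) m k :
  #|[set W : {set T} | (#|W| == m) && (#|W :&: A| == k)]| <= hgeom #|A| #|~: A| m k.
Proof.
pose D := setX [set B : {set T} | B \subset A & #|B| == k]
               [set C : {set T} | C \subset ~: A & #|C| == m - k].
apply: (@leq_trans #|(fun p : {set T} * {set T} => p.1 :|: p.2) @: D|).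
  apply: subset_leq_card; apply/subsetP => W; rewrite inE => /andP [/eqP Wm /eqP Wk].
  apply/imsetP; exists (W :&: A, W :\: A); last by rewrite /= setID.
  by rewrite !inE subsetIr Wk -Wm -(cardsID A W) Wk addKn setDE subsetIr !eqxx.
by rewrite (leq_trans (leq_imset_card _ _)) // cardsX !cards_draws.
Qed.

Section Hypergeometric.
Variables a b m : nat.
Local Notation n := (a + b).
Local Notation f := (hgeom a b m).

Lemma hgeom_le_bin k : k <= m -> f k <= 'C(n, m).
Proof.
move=> km; rewrite -Vandermonde (bigD1 (Ordinal (km : k < m.+1))) //=.
exact: leq_addr.
Qed.

Lemma hgeom_succ k : k < m ->
  f k.+1 * (k.+1 * (b - (m - k.+1))) = f k * ((a - k) * (m - k)).
Proof.
move=> km; rewrite /hgeom.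
have Ea : (a - k) * 'C(a, k) = k.+1 * 'C(a, k.+1) by rewrite -mul_bin_down mul_bin_diag.
have Eb : (b - (m - k.+1)) * 'C(b, m - k.+1) = (m - k) * 'C(b, m - k).
  by rewrite -mul_bin_down mul_bin_diag subnSK.
rewrite mulnACA [_ * k.+1]mulnC [_ * (b - _)]mulnC -Ea Eb.
by rewrite mulnACA mulnC.
Qed.

Variable J : nat.
Hypothesis leJn : J <= n.

Lemma hgeom_decay k : k < m -> m * a + n * J < n * k ->
  f k.+1 * (2 * n) <= f k * (2 * n - J).
Proof.
move=> km hk; have [le_ak|lt_ka] := leqP a k.
  by rewrite /hgeom bin_small ?mul0n // ltnS.
set D := k.+1 * (b - (m - k.+1)); set N := (a - k) * (m - k).
have le_ND : N + n * J <= D.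
  have [u Eu] : exists u, a = k + u by exists (a - k); lia.
  have [w Ew] : exists w, m = k + w by exists (m - k); lia.
  by move: hk; rewrite /D /N; subst a m; rewrite !addKn; nia.
have N_gt0 : 0 < N by rewrite muln_gt0 !subn_gt0 lt_ka km.
have D_gt0 : 0 < D by apply: leq_trans le_ND; rewrite addn_gt0 N_gt0.
have le_scaled : N * (2 * n) <= (2 * n - J) * D.
  have le_Nnn : N <= n * (2 * n - J) by rewrite /N leq_mul; lia.
  have := leq_mul (leqnn J) le_Nnn; have := leq_mul le_ND (leqnn (2 * n - J)).
  by clearbody D N; nia.
rewrite -(leq_pmul2r D_gt0) mulnAC hgeom_succ // -mulnA -[X in _ <= X]mulnA leq_mul2l.
by rewrite -/N le_scaled orbT.
Qed.

Lemma hgeom_decay_iter k j : k + j <= m -> m * a + n * J < n * k ->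
  f (k + j) * (2 * n) ^ j <= f k * (2 * n - J) ^ j.
Proof.
elim: j => [|j IH] le_km hk; first by rewrite addn0 !expn0.
rewrite addnS in le_km *; have le_kjm := ltnW le_km.
have hkj : m * a + n * J < n * (k + j) by rewrite (leq_trans hk) ?leq_mul2l ?leq_addr ?orbT.
rewrite !expnS mulnA (leq_trans (leq_mul (hgeom_decay le_km hkj) (leqnn _))) //.
by rewrite mulnAC [X in _ <= X]mulnCA [X in _ <= X]mulnC leq_mul2r IH ?orbT.
Qed.

Lemma hgeom_tail k : k <= m -> m * a + 2 * n * J < n * k ->
  f k * (2 * n) ^ J <= 'C(n, m) * (2 * n - J) ^ J.
Proof.
move=> le_km hk; have le_Jk : J <= k by nia.
have hkJ : m * a + n * J < n * (k - J) by nia.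
have := @hgeom_decay_iter (k - J) J; rewrite subnK // => /(_ le_km hkJ).
by move/leq_trans; apply; rewrite leq_mul2r hgeom_le_bin ?orbT // (leq_trans (leq_subr _ _)).
Qed.

End Hypergeometric.

Section Draws.
Variables (T : finType) (n m J : nat).
Hypotheses (card_T : #|T| = n) (le_mn : m <= n) (le_Jn : J <= n).

Lemma card_tail_draws (A : {set T}) :
  #|[set W : {set T} | (#|W| == m) && (m * #|A| + 2 * n * J < n * #|W :&: A|)]|
    * (2 * n) ^ J <= m.+1 * ('C(n, m) * (2 * n - J) ^ J).
Proof.
have := le_Jn; rewrite -card_T -(cardsC A) => leJn.
set c := m * #|A| + 2 * (#|A| + #|~: A|) * J.
pose F (k : 'I_m.+1) := [set W : {set T} | (#|W| == m) && (#|W :&: A| == k)].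
have sub_tail : [set W : {set T} | (#|W| == m) && (c < (#|A| + #|~: A|) * #|W :&: A|)]
    \subset \bigcup_(k : 'I_m.+1 | c < (#|A| + #|~: A|) * k) F k.
  apply/subsetP => W; rewrite inE => /andP [/eqP Wm hW].
  have ltWm : #|W :&: A| < m.+1 by rewrite ltnS -Wm subset_leq_card ?subsetIl.
  by apply/bigcupP; exists (Ordinal ltWm); rewrite // inE Wm !eqxx.
rewrite (leq_trans (leq_mul (subset_leq_card sub_tail) (leqnn _))) //.
rewrite (leq_trans (leq_mul (card_bigcup_le _ _) (leqnn _))) // big_distrl /=.
apply: (@leq_trans (\sum_(k < m.+1) 'C(#|A| + #|~: A|, m) * (2 * (#|A| + #|~: A|) - J) ^ J)).
  rewrite big_mkcond /=; apply: leq_sum => k _; case: ifP => // hk.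
  apply: leq_trans (hgeom_tail leJn (ltnSE (ltn_ord k)) hk).
  by rewrite leq_mul2r card_draws_meet_le orbT.
by rewrite sum_nat_const card_ord.
Qed.

Lemma exists_draw_avoiding_tails (I : finType) (F : I -> {set T}) :
  #|I| * m.+1 * (2 * n - J) ^ J < (2 * n) ^ J ->
  exists W : {set T}, #|W| = m /\
    forall i, n * #|W :&: F i| <= m * #|F i| + 2 * n * J.
Proof.
move=> small.
pose tail i := [set W : {set T} | (#|W| == m) && (m * #|F i| + 2 * n * J < n * #|W :&: F i|)].
have lt_bad : #|\bigcup_i tail i| < 'C(n, m).
  have bin_gt0 : 0 < 'C(n, m) by rewrite bin_gt0.
  rewrite -(ltn_pmul2r (leq_ltn_trans (leq0n _) small)).
  rewrite (leq_ltn_trans (leq_mul (card_bigcup_le _ _) (leqnn _))) // big_distrl /=.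
  apply: (@leq_ltn_trans (\sum_(i : I) m.+1 * ('C(n, m) * (2 * n - J) ^ J))).
    by apply: leq_sum => i _; apply: card_tail_draws.
  rewrite sum_nat_const; change #|xpredT| with #|I|.
  by rewrite mulnA mulnA [_ * 'C(_, _)]mulnC -mulnA ltn_pmul2l.
have : ~~ ([set W : {set T} | #|W| == m] \subset \bigcup_i tail i).
  by apply: contraL lt_bad => /subset_leq_card; rewrite card_draws card_T -leqNgt.
case/subsetPn => W; rewrite inE => /eqP Wm /bigcupP not_tail.
exists W; split => // i; rewrite leqNgt; apply/negP => hi.
by apply: not_tail; exists i; rewrite // inE Wm eqxx.
Qed.

Lemma exists_balanced_draw (I : finType) (F : I -> {set T}) :
  2 * #|I| * m.+1 * (2 * n - J) ^ J < (2 * n) ^ J ->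
  exists W : {set T}, #|W| = m /\ forall i,
    n * #|W :&: F i| <= m * #|F i| + 2 * n * J /\
    m * #|F i| <= n * #|W :&: F i| + 2 * n * J.
Proof.
move=> small; pose G (ib : I * bool) := if ib.2 then F ib.1 else ~: F ib.1.
have [|W [Wm hW]] := exists_draw_avoiding_tails G.
  by rewrite card_prod card_bool (mulnC _ 2).
exists W; split => // i; split; first exact: (hW (i, true)).
have := hW (i, false); rewrite /G /= -setDE.
have /(congr1 (muln n)) := cardsID (F i) W; rewrite Wm mulnDr.
have /(congr1 (muln m)) := cardsC (F i); rewrite mulnDr.
rewrite card_T (mulnC m n); lia.
Qed.

End Draws.

Definition nbhd n (E : rel 'I_n) (vo : 'I_n * bool) : {set 'I_n} :=
  if vo.2 then [set u | E vo.1 u] else [set u | E u vo.1].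

Section Semidegree.
Variables (n : nat) (E : rel 'I_n).

Lemma outdeg_inE (W : {set 'I_n}) v : outdeg_in E W v = #|W :&: nbhd E (v, true)|.
Proof. by apply: eq_card => u; rewrite !inE. Qed.

Lemma indeg_inE (W : {set 'I_n}) v : indeg_in E W v = #|W :&: nbhd E (v, false)|.
Proof. by apply: eq_card => u; rewrite !inE. Qed.

Lemma semideg_le_deg (W : {set 'I_n}) v : v \in W ->
  semideg E W <= outdeg_in E W v /\ semideg E W <= indeg_in E W v.
Proof.
move=> Wv; have le_min : semideg E W <= minn (outdeg_in E W v) (indeg_in E W v).
  by rewrite /semideg -!minEnat -leEnat; apply: Order.TotalTheory.bigmin_le_cond.
by split; apply: leq_trans le_min _; rewrite ?geq_minl ?geq_minr.
Qed.

End Semidegree.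

Local Open Scope R_scope.

Lemma INR_leq a b : (a <= b)%N -> INR a <= INR b.
Proof. by move/leP; apply: le_INR. Qed.

Lemma INR_expn a k : INR (a ^ k)%N = INR a ^ k.
Proof. by elim: k => [|k IH] //; rewrite expnS mult_INR IH. Qed.

Lemma exists_nat_floor x : 0 <= x -> exists J : nat, x - 1 < INR J <= x.
Proof.
move=> x_ge0; have [up_gt up_le] := archimed x.
have up_gt0 : (0 < up x)%Z by apply: lt_IZR; lra.
exists (Z.to_nat (up x - 1)).
rewrite INR_IZR_INZ Z2Nat.id ?minus_IZR /=; [lra | lia].
Qed.

Lemma exp_pow_INR z k : exp z ^ k = exp (INR k * z).
Proof.
elim: k => [|k IH]; first by rewrite Rmult_0_l exp_0.
by rewrite -tech_pow_Rmult IH -exp_plus S_INR; congr exp; ring.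
Qed.

Lemma exp_ge_pow k z : 0 <= z -> (z / INR k.+1) ^ k.+1 <= exp z.
Proof.
move=> z_ge0; have k_gt0 : 0 < INR k.+1 by apply: lt_0_INR; lia.
have -> : exp z = exp (z / INR k.+1) ^ k.+1.
  by rewrite exp_pow_INR; congr exp; field; lra.
apply: pow_incr; split; last by have := exp_ineq1_le (z / INR k.+1); lra.
exact: Rle_mult_inv_pos.
Qed.

Lemma exp_le_exp x y : x <= y -> exp x <= exp y.
Proof. by case/Rle_lt_or_eq_dec => [/exp_increasing/Rlt_le | ->] //; apply: Rle_refl. Qed.

Lemma pow_sub_le_exp x (J : nat) : 0 < x -> INR J <= x ->
  (x - INR J) ^ J <= x ^ J * exp (- (INR J ^ 2 / x)).
Proof.
move=> x_gt0 le_Jx; set t := INR J / x.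
have Jt : t * x = INR J by rewrite /t; field; lra.
have t_ge0 : 0 <= t by apply: Rle_mult_inv_pos; [exact: pos_INR | lra].
have -> : x - INR J = x * (1 - t) by rewrite -Jt; ring.
have -> : - (INR J ^ 2 / x) = INR J * - t by rewrite -Jt; field; lra.
rewrite Rpow_mult_distr -exp_pow_INR.
apply: Rmult_le_compat_l; first by apply: pow_le; lra.
apply: pow_incr; have := exp_ineq1_le (- t); nra.
Qed.

Lemma pow_lt_exp_eventually C c k : 0 <= C -> 0 < c ->
  exists R0, forall r, R0 <= r -> C * r ^ k < exp (c * r).
Proof.
move=> C_ge0 c_gt0; pose K := (c / INR k.+1) ^ k.+1.
have K_gt0 : 0 < K.
  by apply: pow_lt; apply: Rdiv_lt_0_compat => //; apply: lt_0_INR; lia.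
exists (C / K + 1) => r le_r.
have r_gt0 : 0 < r by have := Rle_mult_inv_pos _ _ C_ge0 K_gt0; rewrite -/(C / K); lra.
have rk_gt0 : 0 < r ^ k by apply: pow_lt.
have lt_C : C < K * r.
  have -> : C = K * (C / K) by field; lra.
  by apply: Rmult_lt_compat_l; lra.
apply: Rlt_le_trans (exp_ge_pow k (Rlt_le _ _ (Rmult_lt_0_compat _ _ c_gt0 r_gt0))).
have -> : (c * r / INR k.+1) ^ k.+1 = K * r * r ^ k.
  have -> : c * r / INR k.+1 = c / INR k.+1 * r by rewrite /Rdiv; ring.
  by rewrite Rpow_mult_distr -[r ^ k.+1]tech_pow_Rmult Rmult_assoc.
by apply: Rmult_lt_compat_r.
Qed.

Lemma small_tail_eventually alpha : 0 < alpha <= 1 ->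
  exists R0, forall r, R0 <= r -> forall J : nat,
    alpha * r ^ 2 / 2 - 1 < INR J <= alpha * r ^ 2 / 2 ->
    4 * (r ^ 3) ^ 2 * (2 * r ^ 3 - INR J) ^ J < (2 * r ^ 3) ^ J.
Proof.
(* As J >= alpha r^2 / 4, (1 - J/(2 r^3))^J <= exp (- J^2 / (2 r^3))
   <= exp (- c r), and exp (c r) eventually beats 4 r^6. *)
move=> [a_gt0 a_le1]; set c := alpha ^ 2 / 32.
have c_gt0 : 0 < c by rewrite /c; nra.
have [R1 HR1] : exists R1, forall r, R1 <= r -> 4 * r ^ 6 < exp (c * r).
  by apply: pow_lt_exp_eventually => //; lra.
exists (Rmax R1 (4 / alpha)) => r le_r J [J_gt J_le].
have [le_R1r ar] : R1 <= r /\ 4 <= alpha * r.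
  have := Rmax_l R1 (4 / alpha); have := Rmax_r R1 (4 / alpha).
  have : alpha * (4 / alpha) = 4 by field; lra.
  by split; nra.
have r_ge4 : 4 <= r by nra.
have J_ge : alpha * r ^ 2 / 4 <= INR J by nra.
set n := r ^ 3; have n_gt0 : 0 < n by rewrite /n; apply: pow_lt; lra.
have le_J2n : INR J <= 2 * n by rewrite /n; nra.
have cr_le : c * r <= INR J ^ 2 / (2 * n).
  have e : INR J ^ 2 / (2 * n) * (2 * n) = INR J ^ 2 by field; lra.
  have J2 : (alpha * r ^ 2 / 4) ^ 2 <= INR J ^ 2 by apply: pow_incr; nra.
  apply: (Rmult_le_reg_r (2 * n)); first lra.
  by rewrite e /c /n; nra.
have lt1 : 4 * n ^ 2 * exp (- (INR J ^ 2 / (2 * n))) < 1.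
  have := exp_le_exp (Ropp_le_contravar _ _ cr_le); have := HR1 r le_R1r.
  have : exp (- (c * r)) * exp (c * r) = 1 by rewrite -exp_plus Rplus_opp_l exp_0.
  have : n ^ 2 = r ^ 6 by rewrite /n; ring.
  by have := exp_pos (- (c * r)); nra.
have := pow_sub_le_exp (Rmult_lt_0_compat _ _ Rlt_0_2 n_gt0) le_J2n.
have : 0 < (2 * n) ^ J by apply: pow_lt; lra.
have : 0 <= n ^ 2 by apply: pow_le; lra.
nra.
Qed.

Lemma Rpower_third_pow3 x : 0 < x -> Rpower x (1 / 3) ^ 3 = x.
Proof.
move=> x_gt0; rewrite -Rpower_pow ?Rpower_mult; last exact: exp_pos.
have -> : 1 / 3 * INR 3 = 1 by rewrite /=; field.
exact: Rpower_1.
Qed.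

Lemma cube_root_eventually_ge R0 : 0 < R0 -> exists n0 : nat, forall n : nat,
  (n0 <= n)%N -> (0 < n)%N /\ R0 <= Rpower (INR n) (1 / 3).
Proof.
move=> R0_gt0; have R03_gt0 : 0 < R0 ^ 3 by apply: pow_lt.
have [|N [N_gt _]] := @exists_nat_floor (R0 ^ 3); first lra.
exists N.+1 => n le_Nn; split; first exact: leq_ltn_trans le_Nn.
have le_R03n : R0 ^ 3 <= INR n by have := INR_leq le_Nn; rewrite S_INR; lra.
have -> : R0 = Rpower (R0 ^ 3) (1 / 3).
  rewrite -Rpower_pow ?Rpower_mult //.
  have -> : INR 3 * (1 / 3) = 1 by rewrite /=; field.
  by rewrite Rpower_1.
by apply: Rle_Rpower_l; lra.
Qed.

Lemma small_tail_nat n m J : (m < n)%N -> (J <= n)%N ->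
  4 * INR n ^ 2 * (2 * INR n - INR J) ^ J < (2 * INR n) ^ J ->
  (4 * n * m.+1 * (2 * n - J) ^ J < (2 * n) ^ J)%N.
Proof.
move=> lt_mn le_Jn small; apply/ltP/INR_lt.
rewrite !mult_INR !INR_expn minus_INR ?mult_INR; last by apply/leP; lia.
have le_m1n : INR m.+1 <= INR n by apply: INR_leq.
have [-> ->] : INR 2 = 2 /\ INR 4 = 4 by split; rewrite /=; ring.
have Y_ge0 : 0 <= (2 * INR n - INR J) ^ J.
  by apply: pow_le; have := INR_leq le_Jn; have := pos_INR n; lra.
have : INR n * INR m.+1 * (2 * INR n - INR J) ^ J <= INR n ^ 2 * (2 * INR n - INR J) ^ J.
  rewrite /= Rmult_1_r; apply: Rmult_le_compat_r => //.
  by apply: Rmult_le_compat_l => //; apply: pos_INR.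
lra.
Qed.

Lemma card_meet_ge (T : finType) (W A : {set T}) n m J d :
  #|T| = n -> (0 < n)%N -> #|W| = m ->
  (m * #|A| <= n * #|W :&: A| + 2 * n * J)%N ->
  (n * #|W :&: A| <= m * #|A| + 2 * n * J)%N ->
  d * INR n <= INR #|A| ->
  d * INR m - 2 * INR J <= INR #|W :&: A| /\
  d * INR (n - m) - 2 * INR J <= INR #|~: W :&: A|.
Proof.
move=> card_T n_gt0 Wm /INR_leq lb /INR_leq ub le_dA.
have le_mn : (m <= n)%N by rewrite -Wm -card_T max_card.
have split_A : INR #|W :&: A| + INR #|~: W :&: A| = INR #|A|.
  by rewrite -plus_INR -(cardsID W A) setDE !(setIC A).
move: lb ub; rewrite minus_INR; last exact/leP.
rewrite !plus_INR !mult_INR /= => lb ub.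
have := INR_leq le_mn; have := pos_INR m; have : 0 < INR n by apply: lt_0_INR; apply/ltP.
by split; apply: (Rmult_le_reg_l (INR n)) => //; nra.
Qed.

Lemma ratio_ge_sub_inv d r s x (J : nat) : 0 < r -> 0 < x -> INR J * r <= x ->
  d * x - 2 * INR J <= s -> d - 2 * / r <= s / x.
Proof.
move=> r_gt0 x_gt0 le_Jr le_s.
have e : s / x * x = s by field; lra.
have e' : / r * r = 1 by field; lra.
apply: (Rmult_le_reg_r x) => //; rewrite e; have := pos_INR J; nra.
Qed.

Lemma semideg_ge n (E : rel 'I_n) (W : {set 'I_n}) (b : R) : b <= INR #|W| ->
  (forall vo, b <= INR #|W :&: nbhd E vo|) -> b <= INR (semideg E W).
Proof.
move=> le_bW le_bdeg; apply: (big_ind (fun k => b <= INR k)) => //.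
- by move=> x y bx b_y; rewrite /minn; case: ifP.
- by move=> v _; rewrite /minn outdeg_inE indeg_inE; case: ifP.
Qed.

Lemma exists_semideg_split n (E : rel 'I_n) m J delta :
  (0 < n)%N -> (m <= n)%N -> (J <= n)%N ->
  (4 * n * m.+1 * (2 * n - J) ^ J < (2 * n) ^ J)%N ->
  delta <= 1 -> delta * INR n <= INR (semideg E setT) ->
  exists W : {set 'I_n}, #|W| = m /\
    delta * INR m - 2 * INR J <= INR (semideg E W) /\
    delta * INR (n - m) - 2 * INR J <= INR (semideg E (~: W)).
Proof.
move=> n_gt0 le_mn le_Jn small delta_le1 le_delta.
have [|W [Wm balanced]] := exists_balanced_draw (card_ord n) le_mn le_Jn (nbhd E).
  by rewrite card_prod card_ord card_bool (mulnC n) mulnA.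
have le_nbhd vo : delta * INR n <= INR #|nbhd E vo|.
  case: vo => v out; have [le_out le_in] := semideg_le_deg E (in_setT v).
  apply: Rle_trans le_delta (INR_leq _).
  by rewrite -[nbhd E _]setTI; case: out; rewrite -?outdeg_inE -?indeg_inE.
have meet_ge vo : delta * INR m - 2 * INR J <= INR #|W :&: nbhd E vo| /\
    delta * INR (n - m) - 2 * INR J <= INR #|~: W :&: nbhd E vo|.
  have [ub lb] := balanced vo.
  exact: card_meet_ge (card_ord n) n_gt0 Wm lb ub (le_nbhd vo).
have card_Wc : #|~: W| = (n - m)%N by rewrite cardsCs setCK card_ord Wm.
have le_card k : delta * INR k - 2 * INR J <= INR k.
  by have := pos_INR k; have := pos_INR J; nra.
exists W; split => //; split; apply: semideg_ge; rewrite ?Wm ?card_Wc // => vo;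
  by case: (meet_ge vo).
Qed.

Theorem proposition2p3 (alpha : R) (halpha : 0 < alpha <= 1) :
  exists n0 : nat, forall (n m : nat), (n0 <= n)%nat ->
    alpha * INR n <= INR m <= INR n / 2 ->
    forall (E : rel 'I_n) (delta : R), loopless E ->
      0 < delta < 1 ->
      delta * INR n <= INR (semideg E setT) ->
      exists W : {set 'I_n},
        #|W| = m /\
        delta - 2 * Rpower (INR n) (- (1 / 3)) <= INR (semideg E W) / INR m /\
        delta - 2 * Rpower (INR n) (- (1 / 3)) <= INR (semideg E (~: W)) / INR (n - m).
Proof.
have [R0 small_tail] := small_tail_eventually halpha.
have [n0 large_n] := cube_root_eventually_ge (Rlt_le_trans _ _ _ Rlt_0_1 (Rmax_l 1 R0)).
exists n0 => n m le_n0n [le_am le_mn2] E delta _ [delta_gt0 delta_lt1] le_delta.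
have [n_gt0 le_r] := large_n n le_n0n; set r := Rpower (INR n) (1 / 3) in le_r *.
have n_gtR : 0 < INR n by apply: lt_0_INR; apply/ltP.
have r3 : r ^ 3 = INR n := Rpower_third_pow3 n_gtR.
have [r_ge1 le_R0r] : 1 <= r /\ R0 <= r by have := Rmax_l 1 R0; have := Rmax_r 1 R0; lra.
have [|J J_bounds] := @exists_nat_floor (alpha * r ^ 2 / 2); first by nra.
have := small_tail r le_R0r J J_bounds; rewrite r3 => tail_lt.
have le_Jr : INR J * r <= INR m by rewrite -r3 /= in le_am; nra.
have le_Jn : (J <= n)%N by apply/leP/INR_le; nra.
have lt_mn : (m < n)%N by apply/ltP/INR_lt; lra.
have [W [Wm [geW geWc]]] := exists_semideg_split (E := E) n_gt0 (ltnW lt_mn) le_Jn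
  (small_tail_nat lt_mn le_Jn tail_lt) (Rlt_le _ _ delta_lt1) le_delta.
exists W; split => //; rewrite Rpower_Ropp -/r.
have le_mnm : INR m <= INR (n - m) by rewrite minus_INR; [lra | apply/leP/ltnW].
by split; apply: (ratio_ge_sub_inv (J := J)) => //; nra.
Qed.
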